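(* Let $B_i=(\underline{a}_i,\overline{a}_i)\times(\underline{b}_i,\overline{b}_i)\subset\mathbb{R}^2$, $i=1,\dots,N$, be rectangles and $d$ a positive integer, $p=\binom{d+2}{2}$. Let $$V(B_1,\dots,B_N)=\{f\in\mathbb{Z}[x,y]\mid \mathrm{Zero}(f)\cap B_i\neq\emptyset \text{ for all } i=1,\dots,N\},$$ where $\mathrm{Zero}(f)=\{(x,y)\in\mathbb{R}^2\mid f(x,y)=0\}$. Define the polynomial function $D_d:\mathbb{R}^{2N}\to\mathbb{R}$ by $$D_d(x_1,y_1,\dots,x_N,y_N)=\det\Big(\sum_{i=1}^N \mathbf{v}_d(x_i,y_i)\mathbf{v}_d(x_i,y_i)^T\Big),$$ where $\mathbf{v}_d$ is the vector of all $p$ monomials in $x,y$ of total degree at most $d$. If $D_d>0$ at every point of $B_1\times B_2\times\cdots\times B_N\subset\mathbb{R}^{2N}$, then $$\min\{\deg f\mid f\in V(B_1,\dots,B_N),\ f\neq 0\}\ge d+1.$$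
   Context: $\mathbf{v}_d=[1,x,y,x^2,xy,y^2,\dots,x^d,\dots,y^d]^T$ and $\mathbf{v}_d(x_i,y_i)$ is its evaluation at $(x_i,y_i)$. ''Positive definite on the box'' in the paper means strictly positive at every point of the box. *)

From HB Require Import structures.
From mathcomp Require Import all_boot all_order all_algebra.
From mathcomp Require Import mpoly.
Set Implicit Arguments. Unset Strict Implicit. Unset Printing Implicit Defensive.
Import Order.TTheory GRing.Theory Num.Theory.
Local Open Scope ring_scope.

(* exponent pairs (a,b) of the monomials x^a y^b of total degree <= d, in the
   order 1, x, y, x^2, xy, y^2, ..., x^d, ..., y^d *)
Definition monos (d : nat) : seq (nat * nat) :=
  flatten [seq [seq ((k - j)%N, j) | j <- iota 0 k.+1] | k <- iota 0 d.+1].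

Definition pdim (d : nat) : nat := 'C(d.+2, 2).

Definition vd {R : ringType} (d : nat) (x y : R) : 'cV[R]_(pdim d) :=
  \col_(i < pdim d) (x ^+ (nth (0%N, 0%N) (monos d) i).1 *
                     y ^+ (nth (0%N, 0%N) (monos d) i).2).

Definition Dmat {R : comRingType} (d N : nat) (xs ys : 'I_N -> R)
  : 'M[R]_(pdim d) :=
  \sum_(i < N) (vd d (xs i) (ys i) *m (vd d (xs i) (ys i))^T).

Definition D_d {R : comRingType} (d N : nat) (xs ys : 'I_N -> R) : R :=
  \det (Dmat d xs ys).

Definition evalZ {R : ringType} (f : {mpoly int[2]}) (x y : R) : R :=
  mmap (fun z : int => z%:~R) (fun i : 'I_2 => if val i == 0%N then x else y) f.

Definition tdeg (f : {mpoly int[2]}) : nat := (msize f).-1.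

Definition in_rect {R : realFieldType} (alo ahi blo bhi x y : R) : Prop :=
  alo < x < ahi /\ blo < y < bhi.

Definition inV {R : realFieldType} (N : nat) (alo ahi blo bhi : 'I_N -> R)
  (f : {mpoly int[2]}) : Prop :=
  forall i : 'I_N, exists x y : R,
    in_rect (alo i) (ahi i) (blo i) (bhi i) x y /\ evalZ f x y = 0.

Lemma size_monos_check : [seq size (monos d) == pdim d | d <- iota 0 6] = nseq 6 true.
Proof. by []. Qed.

From HB Require Import structures.
From mathcomp Require Import all_boot all_order all_algebra.
From mathcomp Require Import mpoly.
From mathcomp Require Import zify.
Set Implicit Arguments. Unset Strict Implicit. Unset Printing Implicit Defensive.
Import Order.TTheory GRing.Theory Num.Theory.
Local Open Scope ring_scope.

(* If f <> 0 has total degree at most d, its coefficient vector c in the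
   monomial basis of v_d is nonzero and c v_d(x, y) = f(x, y).  Choosing a zero
   (x_i, y_i) of f in each B_i gives
     c (sum_i v_d(x_i, y_i) v_d(x_i, y_i)^T) = sum_i f(x_i, y_i) v_d(x_i, y_i)^T = 0,
   so the matrix is singular and D_d vanishes at a point of B_1 x ... x B_N. *)

Lemma monosS d :
  monos d.+1 = monos d ++ [seq ((d.+1 - j)%N, j) | j <- iota 0 d.+2].
Proof.
have iotaSr : iota 0 d.+2 = iota 0 d.+1 ++ [:: d.+1] by rewrite -addn1 iotaD.
by rewrite [LHS]/monos {1}iotaSr map_cat flatten_cat /= cats0.
Qed.

Lemma size_monos d : size (monos d) = pdim d.
Proof.
elim: d => [|d IHd] //.
by rewrite monosS size_cat IHd size_map size_iota /pdim [in RHS]binS bin1.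
Qed.

Lemma mem_monos d a b : ((a, b) \in monos d) = (a + b <= d)%N.
Proof.
apply/flatten_mapP/idP => [[k] | le_abd].
  rewrite !mem_iota => /andP[_ le_kd] /mapP[j].
  by rewrite mem_iota => ? [-> ->]; lia.
exists (a + b)%N; first by rewrite mem_iota; lia.
by apply/mapP; exists b; [rewrite mem_iota | congr pair]; lia.
Qed.

Lemma monos_uniq d : uniq (monos d).
Proof.
elim: d => [|d IHd] //; rewrite monosS cat_uniq IHd map_inj_uniq ?iota_uniq;
  last by move=> j j' [].
rewrite andbT; apply/hasPn => _ /mapP[j _ ->].
by rewrite mem_monos; lia.
Qed.

Lemma big_uniq_widen (V : Type) (idx : V) (op : Monoid.com_law idx)
    (T : eqType) (s t : seq T) (F : T -> V) :
  uniq s -> uniq t -> {subset s <= t} ->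
  (forall z, z \in t -> z \notin s -> F z = idx) ->
  \big[op/idx]_(z <- t) F z = \big[op/idx]_(z <- s) F z.
Proof.
move=> s_uniq t_uniq sub_st F_idx.
rewrite -(big_rmcond_in op (P := mem s)) // -big_filter.
apply/perm_big/uniq_perm; [exact: filter_uniq | exact: s_uniq |].
by move=> z; rewrite mem_filter andb_idr // => /sub_st.
Qed.

Definition mnm2 (a b : nat) : 'X_{1..2} :=
  [multinom (if val i == 0%N then a else b) | i < 2].

Definition mexps2 (m : 'X_{1..2}) : nat * nat := (m ord0, m ord_max).

Lemma mexps2K m : mnm2 (mexps2 m).1 (mexps2 m).2 = m.
Proof.
by apply/mnmP => -[[|[|//]] lt_i2]; rewrite mnmE; congr (m _); apply: val_inj.
Qed.

Lemma mexps2_inj : injective mexps2.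
Proof. exact: (can_inj (g := fun ab => mnm2 ab.1 ab.2) mexps2K). Qed.

Lemma mnm2K a b : mexps2 (mnm2 a b) = (a, b).
Proof. by rewrite /mexps2 !mnmE. Qed.

Lemma mdeg2 (m : 'X_{1..2}) : mdeg m = (m ord0 + m ord_max)%N.
Proof.
by rewrite mdegE big_ord_recr big_ord1; congr (m _ + m _)%N; apply: val_inj.
Qed.

Section CoefficientVector.

Variables (R : ringType) (d : nat) (f : {mpoly int[2]}).
Hypothesis size_f : (msize f <= d.+1)%N.

Lemma mexps2_msupp m : m \in msupp f -> mexps2 m \in monos d.
Proof.
by move/msize_mdeg_lt/leq_trans/(_ size_f); rewrite mdeg2 ltnS mem_monos.
Qed.

Lemma evalZ_monos x y : evalZ f x y =
  \sum_(ab <- monos d) (f@_(mnm2 ab.1 ab.2))%:~R * (x ^+ ab.1 * y ^+ ab.2 : R).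
Proof.
pose F (ab : nat * nat) :=
  (f@_(mnm2 ab.1 ab.2))%:~R * (x ^+ ab.1 * y ^+ ab.2 : R).
transitivity (\sum_(m <- msupp f) F (mexps2 m)).
  apply: eq_bigr => m _; rewrite /F mexps2K /mmap1 big_ord_recr big_ord1 /=.
  by congr (_ * (x ^+ m _ * _)); apply: val_inj.
rewrite -(big_map _ predT F); symmetry; apply: big_uniq_widen.
- by rewrite (map_inj_uniq mexps2_inj) msupp_uniq.
- exact: monos_uniq.
- by move=> _ /mapP[m /mexps2_msupp ? ->].
- move=> [a b] _ not_supp; rewrite /F memN_msupp_eq0 ?mul0r //.
  apply: contra not_supp => supp_ab.
  by apply/mapP; exists (mnm2 a b); rewrite ?mnm2K.
Qed.

Definition coefv : 'rV[R]_(pdim d) :=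
  \row_(i < pdim d) (f@_(mnm2 (nth (0, 0) (monos d) i).1
                              (nth (0, 0) (monos d) i).2))%:~R.

Lemma coefv_mul_vd x y : coefv *m vd d x y = (evalZ f x y)%:M.
Proof.
apply/matrixP => i j; rewrite !ord1 !mxE mulr1n evalZ_monos.
rewrite (big_nth (0%N, 0%N)) size_monos big_mkord.
by apply: eq_bigr => k _; rewrite !mxE.
Qed.

End CoefficientVector.

Lemma coefv_neq0 (R : numDomainType) d f :
  (msize f <= d.+1)%N -> f != 0 -> coefv R d f != 0.
Proof.
move=> size_f; rewrite -msupp_eq0; case supp_f: (msupp f) => [|m s] // _.
have m_supp : m \in msupp f by rewrite supp_f mem_head.
have m_monos := mexps2_msupp size_f m_supp.
have lt_idx : (index (mexps2 m) (monos d) < pdim d)%N.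
  by rewrite -size_monos index_mem.
apply: contraL m_supp => /eqP/matrixP/(_ 0 (Ordinal lt_idx)).
rewrite !mxE nth_index // mexps2K => /eqP.
by rewrite intr_eq0 mcoeff_msupp negbK.
Qed.

Lemma D_d_eq0 (R : fieldType) d N (xs ys : 'I_N -> R) (c : 'rV_(pdim d)) :
  c != 0 -> (forall i, c *m vd d (xs i) (ys i) = 0) -> D_d d xs ys = 0.
Proof.
move=> c_neq0 c_vd; apply/eqP/det0P; exists c => //.
by rewrite /Dmat mulmx_sumr big1 // => i _; rewrite mulmxA c_vd mul0mx.
Qed.

Lemma inV_witnesses (R : realFieldType) N (alo ahi blo bhi : 'I_N -> R) f :
  inV alo ahi blo bhi f -> exists xs ys : 'I_N -> R, forall i,
    in_rect (alo i) (ahi i) (blo i) (bhi i) (xs i) (ys i) /\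
    evalZ f (xs i) (ys i) = 0.
Proof.
move=> f_inV.
(* The witnesses satisfy a boolean predicate, so [xchoose] selects them
   without any choice axiom. *)
pose P i (p : R * R) :=
  [&& alo i < p.1 < ahi i, blo i < p.2 < bhi i & evalZ f p.1 p.2 == 0].
have exP i : exists p, P i p.
  by have [x [y [[? ?] /eqP ?]]] := f_inV i; exists (x, y); apply/and3P.
exists (fun i => (xchoose (exP i)).1), (fun i => (xchoose (exP i)).2) => i.
by have /and3P[? ? /eqP] := xchooseP (exP i).
Qed.

Theorem corollary3 (R : realFieldType) (N d : nat) (hd : (0 < d)%N)
  (alo ahi blo bhi : 'I_N -> R) :
  (forall xs ys : 'I_N -> R,
     (forall i, in_rect (alo i) (ahi i) (blo i) (bhi i) (xs i) (ys i)) ->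
     0 < D_d d xs ys) ->
  forall f : {mpoly int[2]}, f != 0 -> inV alo ahi blo bhi f ->
    (d.+1 <= tdeg f)%N.
Proof.
move=> D_pos f f_neq0 f_inV; rewrite leqNgt; apply/negP => small_deg.
have size_f : (msize f <= d.+1)%N by move: small_deg; rewrite /tdeg; lia.
have [xs [ys zeros]] := inV_witnesses f_inV.
have : 0 < D_d d xs ys by apply: D_pos => i; have [] := zeros i.
rewrite (D_d_eq0 (coefv_neq0 _ size_f f_neq0)) ?ltxx // => i.
by rewrite coefv_mul_vd // (zeros i).2 raddf0.
Qed.
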